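(* Let $a\in(0,1)$ and $\theta>0$ be as in the context and write $\Gamma=\Gamma(\zeta+1)$. Then for all $t>0$: for $\zeta>0$: $\dfrac{\Gamma}{a^{-\zeta}-1}\le h^{(1,\zeta)}_t\le\dfrac{a^{-\zeta}\Gamma}{a^{-\zeta}-1}$; for $-1<\zeta<0$: $\dfrac{a^{-\zeta}\Gamma}{1-a^{-\zeta}}\le h^{(2,\zeta)}_t\le\dfrac{\Gamma}{1-a^{-\zeta}}$; $\dfrac{a^{-\zeta}(2-2^{-\zeta})\Gamma}{1-a^{-\zeta}}\le h^{(3,\zeta)}_t\le\dfrac{(2-2^{-\zeta})\Gamma}{1-a^{-\zeta}}$; $\dfrac{a^{-\zeta}\Gamma}{(1-a^{-\zeta})(1-\zeta)}\le\tilde h^{(2,\zeta)}_t\le\dfrac{\Gamma}{(1-a^{-\zeta})(1-\zeta)}$; $\dfrac{a^{-\zeta}(2-2^{-\zeta})\Gamma}{(1-a^{-\zeta})(1-\zeta)}\le\tilde h^{(3,\zeta)}_t\le\dfrac{(2-2^{-\zeta})\Gamma}{(1-a^{-\zeta})(1-\zeta)}$.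
   Context: Let $N\ge2$, $0<c<N$, $\sigma>0$, $a=c/N$, $\theta=\sigma(N^2/c-1)/(N-1)$. For $t>0$: for $\zeta>0$, $h^{(1,\zeta)}_t=\sum_{j\in\mathbb Z}(\theta a^jt)^\zeta e^{-\theta a^jt}$; for $-1<\zeta<0$, $h^{(2,\zeta)}_t=\sum_{j\in\mathbb Z}(\theta a^jt)^\zeta(1-e^{-\theta a^jt})$, $h^{(3,\zeta)}_t=\sum_{j\in\mathbb Z}(\theta a^jt)^\zeta(1-e^{-\theta a^jt})^2$, $\tilde h^{(2,\zeta)}_t=\sum_{j\in\mathbb Z}(\theta a^jt)^{\zeta-1}(e^{-\theta a^jt}-1+\theta a^jt)$, $\tilde h^{(3,\zeta)}_t=\sum_{j\in\mathbb Z}(\theta a^jt)^{\zeta-1}(2e^{-\theta a^jt}-\frac12e^{-2\theta a^jt}+\theta a^jt-\frac32)$. *)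

From Stdlib Require Import Reals ZArith.
From Coquelicot Require Import Coquelicot.
Open Scope R_scope.

Definition Gamma (s : R) : R :=
  RInt_gen (fun x => Rpower x (s - 1) * exp (- x)) (at_right 0) (Rbar_locally p_infty).

Definition zpos (f : Z -> R) (n : nat) : R := f (Z.of_nat n).
Definition zneg (f : Z -> R) (n : nat) : R := f (- Z.of_nat n - 1)%Z.
Definition zsummable (f : Z -> R) : Prop := ex_series (zpos f) /\ ex_series (zneg f).
Definition zsum (f : Z -> R) : R := Series (zpos f) + Series (zneg f).

Definition a_par (N : nat) (c : R) : R := c / INR N.
Definition theta_par (N : nat) (c sigma : R) : R :=
  sigma * (INR N ^ 2 / c - 1) / (INR N - 1).

Definition u (a theta t : R) (j : Z) : R := theta * powerRZ a j * t.

Definition h1_term a theta zeta t j :=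
  Rpower (u a theta t j) zeta * exp (- u a theta t j).
Definition h2_term a theta zeta t j :=
  Rpower (u a theta t j) zeta * (1 - exp (- u a theta t j)).
Definition h3_term a theta zeta t j :=
  Rpower (u a theta t j) zeta * (1 - exp (- u a theta t j)) ^ 2.
Definition h2t_term a theta zeta t j :=
  Rpower (u a theta t j) (zeta - 1) * (exp (- u a theta t j) - 1 + u a theta t j).
Definition h3t_term a theta zeta t j :=
  Rpower (u a theta t j) (zeta - 1) *
  (2 * exp (- u a theta t j) - / 2 * exp (- (2 * u a theta t j)) + u a theta t j - 3 / 2).

(* Put y_j = theta a^j t, so that y_(j+1) = a y_j.  Each of h1, h2, h3 is a lattice sum
   sum_j y_j^zeta G(y_j) with G' = g for g(s) = -e^-s, e^-s or 2 (1 - e^-s) e^-s.  Writing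
   G(y_j) - G(a y_j) as the integral of g over the cell [a y_j, y_j] and bounding s^zeta there
   by y_j^zeta and (a y_j)^zeta, the telescoped sum is squeezed against the integral of
   s^zeta g(s) over (0, +oo), which is -Gamma(zeta+1), Gamma(zeta+1) or (2 - 2^-zeta) Gamma(zeta+1).
   A tilde term is y^(zeta-1) times an antiderivative, i.e. the integral over r in [0, 1] of
   y^zeta G(r y); summed over j, the integrand is r^-zeta times the untilded sum at time r t, so
   its bounds integrate against r^-zeta to give the extra factor 1/(1 - zeta). *)

From Stdlib Require Import Reals ZArith Lra Lia.
From Coquelicot Require Import Coquelicot.
Open Scope R_scope.

(** * Sums over Z *)

(* The sum of [f j] over [- n - 1 <= j <= n]. *)
Fixpoint zpartial (f : Z -> R) (n : nat) : R :=
  match n with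
  | O => zpos f 0 + zneg f 0
  | S m => zpartial f m + zpos f (S m) + zneg f (S m)
  end.

Lemma zpartial_sum_n f n : zpartial f n = sum_n (zpos f) n + sum_n (zneg f) n.
Proof.
  induction n as [|n IH]; simpl.
  - now rewrite !sum_O.
  - rewrite IH, !sum_Sn; unfold plus; simpl; ring.
Qed.

Lemma is_lim_seq_zpartial f : zsummable f -> is_lim_seq (zpartial f) (zsum f).
Proof.
  intros [Hpos Hneg].
  apply (is_lim_seq_ext (fun n => sum_n (zpos f) n + sum_n (zneg f) n)).
  { intros n; symmetry; apply zpartial_sum_n. }
  apply is_lim_seq_plus'; now apply Series_correct.
Qed.

Lemma zpartial_ext f g n : (forall j, f j = g j) -> zpartial f n = zpartial g n.
Proof. intros H; induction n; simpl; unfold zpos, zneg; rewrite ?IHn, !H; reflexivity. Qed.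

Lemma zpartial_lin f g al be n :
  zpartial (fun j => al * f j + be * g j) n = al * zpartial f n + be * zpartial g n.
Proof. induction n; simpl; unfold zpos, zneg in *; rewrite ?IHn; ring. Qed.

Lemma zpartial_scal f k n : zpartial (fun j => k * f j) n = k * zpartial f n.
Proof. induction n; simpl; unfold zpos, zneg in *; rewrite ?IHn; ring. Qed.

Lemma zpartial_le f g n : (forall j, f j <= g j) -> zpartial f n <= zpartial g n.
Proof.
  intros H; rewrite !zpartial_sum_n.
  apply Rplus_le_compat; apply sum_n_m_le; intros k; apply H.
Qed.

Lemma zpartial_ge0 f n : (forall j, 0 <= f j) -> 0 <= zpartial f n.
Proof.
  intros H; induction n; simpl; unfold zpos, zneg.
  - pose proof (H (Z.of_nat 0)); pose proof (H (- Z.of_nat 0 - 1)%Z); lra.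
  - pose proof (H (Z.of_nat (S n))); pose proof (H (- Z.of_nat (S n) - 1)%Z); lra.
Qed.

Lemma zpartial_le_zsum f n : (forall j, 0 <= f j) -> zsummable f -> zpartial f n <= zsum f.
Proof.
  intros H Hf; apply is_lim_seq_incr_compare; [now apply is_lim_seq_zpartial|].
  intros m; simpl; unfold zpos, zneg.
  pose proof (H (Z.of_nat (S m))); pose proof (H (- Z.of_nat (S m) - 1)%Z); lra.
Qed.

Lemma zsum_ext f g : (forall j, f j = g j) -> zsum f = zsum g.
Proof. intros H; unfold zsum, zpos, zneg; now rewrite !(Series_ext _ _ (fun n => H _)). Qed.

Lemma zsummable_ext f g : (forall j, f j = g j) -> zsummable f -> zsummable g.
Proof.
  intros H [Hp Hn]; split; [apply (ex_series_ext (zpos f)) | apply (ex_series_ext (zneg f))];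
    auto; intros n; apply H.
Qed.

Lemma zsummable_lin f g al be :
  zsummable f -> zsummable g -> zsummable (fun j => al * f j + be * g j).
Proof.
  intros [Fp Fn] [Gp Gn]; split;
    apply (@ex_series_plus R_AbsRing R_NormedModule);
    now apply (@ex_series_scal_l R_AbsRing R_NormedModule).
Qed.

Lemma zsum_lin f g al be : zsummable f -> zsummable g ->
  zsum (fun j => al * f j + be * g j) = al * zsum f + be * zsum g.
Proof.
  intros [Fp Fn] [Gp Gn]; unfold zsum, zpos, zneg in *.
  rewrite !Series_plus, !Series_scal_l; try ring;
    now apply (@ex_series_scal_l R_AbsRing R_NormedModule).
Qed.

Lemma ex_series_le_nonneg (f g : nat -> R) :
  (forall n, 0 <= f n <= g n) -> ex_series g -> ex_series f.
Proof.
  intros H; apply (@ex_series_le R_AbsRing R_CompleteNormedModule); intros n.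
  change (norm (f n)) with (Rabs (f n)); rewrite Rabs_pos_eq; apply H.
Qed.

Lemma zsummable_le f g : (forall j, 0 <= f j <= g j) -> zsummable g -> zsummable f.
Proof.
  intros H [Gp Gn]; split; [apply (ex_series_le_nonneg _ (zpos g)) | apply (ex_series_le_nonneg _ (zneg g))];
    auto; intros n; apply H.
Qed.

Lemma ex_series_geom_scal C r : 0 <= r < 1 -> ex_series (fun n => C * r ^ n).
Proof.
  intros Hr; apply (@ex_series_scal_l R_AbsRing R_NormedModule), ex_series_geom.
  rewrite Rabs_pos_eq; lra.
Qed.

Lemma zsummable_geom f C1 r1 C2 r2 : 0 <= r1 < 1 -> 0 <= r2 < 1 -> (forall j, 0 <= f j) ->
  (forall n, f (Z.of_nat n) <= C1 * r1 ^ n) -> (forall n, f (- Z.of_nat n - 1)%Z <= C2 * r2 ^ n) ->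
  zsummable f.
Proof.
  intros Hr1 Hr2 H0 Hp Hn; split.
  - apply (ex_series_le_nonneg _ (fun n => C1 * r1 ^ n)); [|now apply ex_series_geom_scal].
    intros n; split; [apply H0 | apply Hp].
  - apply (ex_series_le_nonneg _ (fun n => C2 * r2 ^ n)); [|now apply ex_series_geom_scal].
    intros n; split; [apply H0 | apply Hn].
Qed.

Lemma zpartial_telescope (T : Z -> R) al be n :
  zpartial (fun j => al * T j - be * T (j + 1)%Z) n
  = (al - be) * zpartial T n + be * (T (- Z.of_nat n - 1)%Z - T (Z.of_nat (S n))).
Proof.
  induction n as [|n IH]; simpl zpartial; unfold zpos, zneg.
  - simpl; ring.
  - rewrite IH.
    replace (Z.of_nat (S n) + 1)%Z with (Z.of_nat (S (S n))) by lia.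
    replace (- Z.of_nat (S n) - 1 + 1)%Z with (- Z.of_nat n - 1)%Z by lia.
    ring.
Qed.

Lemma is_lim_seq_zpartial_telescope (T : Z -> R) al be : zsummable T ->
  is_lim_seq (zpartial (fun j => al * T j - be * T (j + 1)%Z)) ((al - be) * zsum T).
Proof.
  intros HT.
  assert (Hends : is_lim_seq (fun n => T (- Z.of_nat n - 1)%Z - T (Z.of_nat (S n))) 0).
  { destruct HT as [Hp Hn].
    apply ex_series_lim_0, is_lim_seq_incr_1 in Hp; apply ex_series_lim_0 in Hn.
    replace 0 with (0 - 0) by ring; now apply is_lim_seq_minus'. }
  apply (is_lim_seq_ext _ _ _ (fun n => eq_sym (zpartial_telescope T al be n))).
  replace ((al - be) * zsum T) with ((al - be) * zsum T + be * 0) by ring.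
  apply is_lim_seq_plus'; apply is_lim_seq_mult'; auto using is_lim_seq_const, is_lim_seq_zpartial.
Qed.

Ltac solve_continuous :=
  apply (@ex_derive_continuous R_AbsRing R_NormedModule); auto_derive; auto.

Lemma ex_RInt_pos (f : R -> R) u v : (forall s, 0 < s -> continuous f s) -> 0 < u -> 0 < v -> ex_RInt f u v.
Proof.
  intros Hf Hu Hv; apply (@ex_RInt_continuous R_CompleteNormedModule); intros s Hs; apply Hf.
  assert (0 < Rmin u v) by now apply Rmin_glb_lt. lra.
Qed.

Lemma exp_le x y : x <= y -> exp x <= exp y.
Proof. intros [H | ->]; [now apply Rlt_le, exp_increasing | lra]. Qed.

Lemma exp_opp_le_1 s : 0 <= s -> exp (- s) <= 1.
Proof. intros Hs; rewrite <- exp_0; apply exp_le; lra. Qed.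

Lemma Rpower_1_l z : Rpower 1 z = 1.
Proof. unfold Rpower; now rewrite ln_1, Rmult_0_r, exp_0. Qed.

Lemma Rle_Rpower_l_nonpos z x y : z <= 0 -> 0 < x <= y -> Rpower y z <= Rpower x z.
Proof.
  intros Hz Hxy; unfold Rpower; apply exp_le, Rmult_le_compat_neg_l; auto.
  apply ln_le; lra.
Qed.

Lemma Rpower_lt_1 a z : 0 < a < 1 -> 0 < z -> Rpower a z < 1.
Proof.
  intros Ha Hz; unfold Rpower; rewrite <- exp_0; apply exp_increasing.
  assert (ln a < 0) by (rewrite <- ln_1; apply ln_increasing; lra). nra.
Qed.

Lemma Rpower_gt_1 a z : 0 < a < 1 -> z < 0 -> 1 < Rpower a z.
Proof.
  intros Ha Hz; unfold Rpower; rewrite <- exp_0; apply exp_increasing.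
  assert (ln a < 0) by (rewrite <- ln_1; apply ln_increasing; lra). nra.
Qed.

Lemma continuous_mult_R (f g : R -> R) x :
  continuous f x -> continuous g x -> continuous (fun s => f s * g s) x.
Proof. apply (@continuous_mult R_UniformSpace R_AbsRing). Qed.

Lemma continuous_plus_R (f g : R -> R) x :
  continuous f x -> continuous g x -> continuous (fun s => f s + g s) x.
Proof. apply (@continuous_plus R_UniformSpace R_AbsRing R_NormedModule). Qed.

Lemma continuous_Rpower z s : 0 < s -> continuous (fun s => Rpower s z) s.
Proof.
  intros Hs; apply (@ex_derive_continuous R_AbsRing R_NormedModule).
  exists (z * Rpower s (z - 1)); now apply is_derive_Reals, derivable_pt_lim_power.
Qed.

Lemma RInt_scal_R (f : R -> R) u v k : ex_RInt f u v -> RInt (fun s => k * f s) u v = k * RInt f u v.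
Proof. apply (@RInt_scal R_CompleteNormedModule). Qed.

Lemma RInt_plus_R (f g : R -> R) u v : ex_RInt f u v -> ex_RInt g u v ->
  RInt (fun s => f s + g s) u v = RInt f u v + RInt g u v.
Proof. apply (@RInt_plus R_CompleteNormedModule). Qed.

Lemma RInt_const_R c u v : RInt (fun _ => c) u v = (v - u) * c.
Proof. apply (@RInt_const R_CompleteNormedModule). Qed.

Lemma RInt_ext_pos (f g : R -> R) u v : 0 < u -> 0 < v ->
  (forall s, 0 < s -> f s = g s) -> RInt f u v = RInt g u v.
Proof.
  intros Hu Hv H; apply (@RInt_ext R_CompleteNormedModule); intros s Hs; apply H.
  assert (0 < Rmin u v) by now apply Rmin_glb_lt. lra.
Qed.

Lemma RInt_Rpower u v z : 0 < u -> 0 < v -> z + 1 <> 0 ->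
  RInt (fun s => Rpower s z) u v = (Rpower v (z + 1) - Rpower u (z + 1)) / (z + 1).
Proof.
  intros Hu Hv Hz; apply is_RInt_unique.
  assert (Hmin : 0 < Rmin u v) by now apply Rmin_glb_lt.
  replace ((Rpower v (z + 1) - Rpower u (z + 1)) / (z + 1))
    with (minus (Rpower v (z + 1) / (z + 1)) (Rpower u (z + 1) / (z + 1)))
    by (unfold minus, plus, opp; simpl; field; auto).
  apply (@is_RInt_derive R_CompleteNormedModule (fun s => Rpower s (z + 1) / (z + 1))); intros s Hs.
  - apply (is_derive_ext (fun s => / (z + 1) * Rpower s (z + 1))); [intros; simpl; field; auto|].
    replace (Rpower s z) with (/ (z + 1) * ((z + 1) * Rpower s (z + 1 - 1)))
      by (replace (z + 1 - 1) with z by ring; field; auto).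
    apply (is_derive_scal (fun s => Rpower s (z + 1))), is_derive_Reals, derivable_pt_lim_power; lra.
  - apply continuous_Rpower; lra.
Qed.

Lemma RInt_le_superset (f : R -> R) u v u' v' :
  (forall s, 0 < s -> continuous f s) -> (forall s, 0 < s -> 0 <= f s) ->
  0 < u' <= u -> u <= v <= v' -> RInt f u v <= RInt f u' v'.
Proof.
  intros Hf Hpos Hu Hv.
  assert (Hex : forall p q, 0 < p -> 0 < q -> ex_RInt f p q) by (intros; now apply ex_RInt_pos).
  assert (Hge0 : forall p q, 0 < p <= q -> 0 <= RInt f p q).
  { intros p q Hpq; apply RInt_ge_0; try apply Hex; try lra; intros; apply Hpos; lra. }
  rewrite <- (@RInt_Chasles R_CompleteNormedModule f u' u v'), <- (@RInt_Chasles R_CompleteNormedModule f u v v')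
    by (apply Hex; lra).
  pose proof (Hge0 u' u); pose proof (Hge0 v v'); simpl; unfold plus; simpl; lra.
Qed.

Lemma powerRZ_opp_succ q n : powerRZ q (- Z.of_nat n - 1) = / q * (/ q) ^ n.
Proof.
  replace (- Z.of_nat n - 1)%Z with (- Z.of_nat (S n))%Z by lia.
  rewrite powerRZ_neg', <- pow_powerRZ, pow_inv, <- Rinv_mult; reflexivity.
Qed.

Section Grid.

Variables (a theta : R).
Hypotheses (Ha : 0 < a < 1) (Htheta : 0 < theta).

Lemma u_pos t j : 0 < t -> 0 < u a theta t j.
Proof.
  intros Ht; unfold u; apply Rmult_lt_0_compat; [apply Rmult_lt_0_compat|]; auto.
  apply powerRZ_lt; lra.
Qed.

Lemma u_succ t j : u a theta t (j + 1) = a * u a theta t j.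
Proof. unfold u; rewrite powerRZ_add by lra; simpl; ring. Qed.

Lemma u_dilate r t j : u a theta (r * t) j = r * u a theta t j.
Proof. unfold u; ring. Qed.

Lemma u_of_nat t n : u a theta t (Z.of_nat n) = theta * t * a ^ n.
Proof. unfold u; rewrite <- pow_powerRZ; ring. Qed.

Lemma u_neg t n : u a theta t (- Z.of_nat n - 1) = theta * t / a * (/ a) ^ n.
Proof.
  unfold u; rewrite powerRZ_opp_succ; field; lra.
Qed.

Lemma Rpower_u t z j : 0 < t ->
  Rpower (u a theta t j) z = Rpower (theta * t) z * powerRZ (Rpower a z) j.
Proof.
  intros Ht; unfold u.
  replace (theta * powerRZ a j * t) with (theta * t * powerRZ a j) by ring.
  rewrite <- Rpower_mult_distr by (try apply powerRZ_lt; nra).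
  rewrite !powerRZ_Rpower by (try apply exp_pos; lra).
  f_equal; rewrite !Rpower_mult; f_equal; ring.
Qed.

Lemma is_lim_seq_u_pos t : is_lim_seq (fun n => u a theta t (Z.of_nat (S n))) 0.
Proof.
  apply (is_lim_seq_ext (fun n => theta * t * a ^ (S n))); [intros n; now rewrite u_of_nat|].
  replace 0 with (theta * t * 0) by ring.
  apply is_lim_seq_mult'; [apply is_lim_seq_const|].
  apply is_lim_seq_incr_1 with (u := fun n => a ^ n), is_lim_seq_geom.
  rewrite Rabs_pos_eq; lra.
Qed.

Lemma is_lim_seq_u_neg t : 0 < t -> is_lim_seq (fun n => u a theta t (- Z.of_nat n - 1)) p_infty.
Proof.
  intros Ht; apply (is_lim_seq_ext (fun n => theta * t / a * (/ a) ^ n));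
    [intros n; now rewrite u_neg|].
  assert (Hinv : 1 < / a) by (rewrite <- Rinv_1; apply Rinv_lt_contravar; lra).
  apply (is_lim_seq_ext (fun n => (/ a) ^ n * (theta * t / a))); [intros n; ring|].
  apply (is_lim_seq_mult _ _ p_infty (theta * t / a)).
  - now apply is_lim_seq_geom_p.
  - apply is_lim_seq_const.
  - apply is_Rbar_mult_p_infty_pos; simpl; apply Rdiv_lt_0_compat; nra.
Qed.

Lemma zpartial_RInt_u (f : R -> R) t n : 0 < t ->
  (forall s, 0 < s -> continuous f s) ->
  zpartial (fun j => RInt f (u a theta t (j + 1)) (u a theta t j)) n
  = RInt f (u a theta t (Z.of_nat (S n))) (u a theta t (- Z.of_nat n - 1)).
Proof.
  intros Ht Hf.
  assert (Hchasles : forall i j k, RInt f (u a theta t i) (u a theta t j) + RInt f (u a theta t j) (u a theta t k)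
                                   = RInt f (u a theta t i) (u a theta t k)).
  { intros i j k; apply (@RInt_Chasles R_CompleteNormedModule); apply ex_RInt_pos; auto using u_pos. }
  induction n as [|n IH]; simpl zpartial; unfold zpos, zneg.
  - simpl; apply Hchasles.
  - rewrite IH.
    replace (Z.of_nat (S n) + 1)%Z with (Z.of_nat (S (S n))) by lia.
    replace (- Z.of_nat (S n) - 1 + 1)%Z with (- Z.of_nat n - 1)%Z by lia.
    pose proof (Hchasles (Z.of_nat (S (S n))) (Z.of_nat (S n)) (- Z.of_nat n - 1)%Z).
    pose proof (Hchasles (Z.of_nat (S (S n))) (- Z.of_nat n - 1)%Z (- Z.of_nat (S n) - 1)%Z).
    lra.
Qed.

End Grid.

(** * Improper integrals on (0, +oo) and the Gamma function *)

Definition is_RInt_0_oo (f : R -> R) (L : R) :=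
  forall eps, 0 < eps -> exists a0 b0, 0 < a0 /\
    forall a b, 0 < a <= a0 -> b0 <= b -> Rabs (RInt f a b - L) < eps.

Lemma is_RInt_0_oo_of_bounded (f : R -> R) M :
  (forall s, 0 < s -> continuous f s) -> (forall s, 0 < s -> 0 <= f s) ->
  (forall a b, 0 < a < b -> RInt f a b <= M) ->
  exists L, is_RInt_0_oo f L.
Proof.
  intros Hf Hpos HM.
  set (E := fun r => exists a b, 0 < a < b /\ r = RInt f a b).
  assert (Hbound : bound E) by (exists M; intros r (a & b & Hab & ->); now apply HM).
  assert (Hne : exists r, E r) by (exists (RInt f 1 2), 1, 2; split; [lra | reflexivity]).
  destruct (completeness E Hbound Hne) as [L [HLub HLleast]].
  exists L; intros eps Heps.
  assert (Happrox : exists r, E r /\ L - eps < r).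
  { apply Classical_Pred_Type.not_all_not_ex; intros Hnone.
    enough (L <= L - eps) by lra.
    apply HLleast; intros r Hr; apply Rnot_lt_le; intros Hlt; now apply (Hnone r). }
  destruct Happrox as (r & (a0 & b0 & Hab0 & ->) & Hr).
  exists a0, b0; split; [lra|]; intros a b Ha Hb.
  assert (RInt f a0 b0 <= RInt f a b) by (apply RInt_le_superset; auto; lra).
  assert (RInt f a b <= L) by (apply HLub; exists a, b; split; [lra | reflexivity]).
  apply Rabs_def1; lra.
Qed.

Lemma is_RInt_gen_of_is_RInt_0_oo (f : R -> R) L :
  (forall s, 0 < s -> continuous f s) -> is_RInt_0_oo f L ->
  is_RInt_gen f (at_right 0) (Rbar_locally p_infty) L.
Proof.
  intros Hf HL.
  apply (filterlimi_lim_ext_loc (fun ab => RInt f (fst ab) (snd ab))).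
  - apply (Filter_prod _ _ _ (fun a => 0 < a) (fun b => 0 < b)).
    + exists (mkposreal 1 Rlt_0_1); intros y _ Hy; exact Hy.
    + exists 0; intros y Hy; exact Hy.
    + intros a b Ha Hb; apply (@RInt_correct R_CompleteNormedModule), ex_RInt_pos; auto.
  - apply filterlim_locally; intros eps.
    destruct (HL eps (cond_pos eps)) as (a0 & b0 & Ha0 & H).
    apply (Filter_prod _ _ _ (fun a => 0 < a <= a0) (fun b => b0 <= b)).
    + exists (mkposreal a0 Ha0); intros y Hy Hy0; split; auto.
      unfold ball in Hy; simpl in Hy; unfold AbsRing_ball, abs, minus, plus, opp in Hy; simpl in Hy.
      rewrite Rabs_pos_eq in Hy; lra.
    + exists b0; intros y Hy; lra.
    + intros a b Ha Hb; now apply H.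
Qed.

Lemma is_RInt_0_oo_ext (f g : R -> R) L :
  (forall s, 0 < s -> f s = g s) -> is_RInt_0_oo f L -> is_RInt_0_oo g L.
Proof.
  intros Hfg HL eps Heps; destruct (HL eps Heps) as (a0 & b0 & Ha0 & H).
  exists a0, (Rmax b0 1); split; auto; intros a b Ha Hb.
  rewrite <- (RInt_ext_pos f g) by (auto; pose proof (Rmax_r b0 1); lra).
  apply H; auto; pose proof (Rmax_l b0 1); lra.
Qed.

Lemma is_RInt_0_oo_lin (f g : R -> R) al be Lf Lg :
  (forall s, 0 < s -> continuous f s) -> (forall s, 0 < s -> continuous g s) ->
  is_RInt_0_oo f Lf -> is_RInt_0_oo g Lg ->
  is_RInt_0_oo (fun s => al * f s + be * g s) (al * Lf + be * Lg).
Proof.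
  intros Hf Hg HLf HLg eps Heps.
  pose proof (Rabs_pos al); pose proof (Rabs_pos be).
  set (k := Rabs al + Rabs be + 1).
  assert (Hk : 0 < k) by (unfold k; lra).
  destruct (HLf (eps / k)) as (a1 & b1 & Ha1 & H1); [now apply Rdiv_lt_0_compat|].
  destruct (HLg (eps / k)) as (a2 & b2 & Ha2 & H2); [now apply Rdiv_lt_0_compat|].
  exists (Rmin a1 a2), (Rmax (Rmax b1 b2) 1); split; [now apply Rmin_glb_lt|].
  intros a b Ha Hb.
  pose proof (Rmin_l a1 a2); pose proof (Rmin_r a1 a2).
  pose proof (Rmax_l (Rmax b1 b2) 1); pose proof (Rmax_r (Rmax b1 b2) 1);
    pose proof (Rmax_l b1 b2); pose proof (Rmax_r b1 b2).
  assert (Hab : 0 < b) by lra.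
  rewrite RInt_plus_R, !RInt_scal_R by
    (apply ex_RInt_pos; try lra; intros s Hs;
     repeat first [solve [auto] | apply continuous_plus_R | apply continuous_mult_R | apply continuous_const]).
  specialize (H1 a b ltac:(lra) ltac:(lra)); specialize (H2 a b ltac:(lra) ltac:(lra)).
  replace (al * RInt f a b + be * RInt g a b - (al * Lf + be * Lg))
    with (al * (RInt f a b - Lf) + be * (RInt g a b - Lg)) by ring.
  eapply Rle_lt_trans; [apply Rabs_triang|]; rewrite !Rabs_mult.
  apply Rle_lt_trans with ((Rabs al + Rabs be) * (eps / k)).
  - assert (Rabs al * Rabs (RInt f a b - Lf) <= Rabs al * (eps / k)) by (apply Rmult_le_compat_l; lra).
    assert (Rabs be * Rabs (RInt g a b - Lg) <= Rabs be * (eps / k)) by (apply Rmult_le_compat_l; lra).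
    lra.
  - replace ((Rabs al + Rabs be) * (eps / k)) with (eps - eps / k) by (unfold k; field; lra).
    assert (0 < eps / k) by now apply Rdiv_lt_0_compat. lra.
Qed.

Lemma is_RInt_0_oo_dilate (f : R -> R) c L : 0 < c ->
  (forall s, 0 < s -> continuous f s) -> is_RInt_0_oo f L ->
  is_RInt_0_oo (fun s => c * f (c * s)) L.
Proof.
  intros Hc Hf HL eps Heps; destruct (HL eps Heps) as (a0 & b0 & Ha0 & H).
  exists (a0 / c), (Rmax (b0 / c) 1); split; [now apply Rdiv_lt_0_compat|]; intros a b Ha Hb.
  pose proof (Rmax_l (b0 / c) 1); pose proof (Rmax_r (b0 / c) 1).
  pose proof (@RInt_comp_lin R_CompleteNormedModule f c 0 a b) as Hcomp.
  rewrite !Rplus_0_r in Hcomp.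
  replace (RInt (fun s => c * f (c * s)) a b) with (RInt f (c * a) (c * b)).
  - apply H; [split|].
    + nra.
    + apply (Rmult_le_reg_r (/ c)); [now apply Rinv_0_lt_compat|].
      replace (c * a * / c) with a by (field; lra); exact (proj2 Ha).
    + apply (Rmult_le_reg_r (/ c)); [now apply Rinv_0_lt_compat|].
      replace (c * b * / c) with b by (field; lra); unfold Rdiv in *; lra.
  - rewrite <- Hcomp by (apply ex_RInt_pos; auto; nra).
    apply (@RInt_ext R_CompleteNormedModule); intros s _; rewrite Rplus_0_r; reflexivity.
Qed.

Lemma is_lim_seq_zpartial_RInt_u a theta t (f : R -> R) L :
  0 < a < 1 -> 0 < theta -> 0 < t ->
  (forall s, 0 < s -> continuous f s) -> is_RInt_0_oo f L ->
  is_lim_seq (zpartial (fun j => RInt f (u a theta t (j + 1)) (u a theta t j))) L.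
Proof.
  intros Ha Htheta Ht Hf HL.
  apply (is_lim_seq_ext _ _ _ (fun n => eq_sym (zpartial_RInt_u a theta Ha Htheta f t n Ht Hf))).
  apply is_lim_seq_spec; intros eps.
  destruct (HL eps (cond_pos eps)) as (a0 & b0 & Ha0 & H).
  destruct (proj2 (is_lim_seq_spec _ _) (is_lim_seq_u_pos a theta Ha t) (mkposreal a0 Ha0)) as [N1 HN1].
  destruct (proj2 (is_lim_seq_spec _ _) (is_lim_seq_u_neg a theta Ha Htheta t Ht) b0) as [N2 HN2].
  exists (max N1 N2); intros n Hn; apply H.
  - specialize (HN1 n ltac:(lia)).
    pose proof (u_pos a theta Ha Htheta t (Z.of_nat (S n)) Ht).
    cbn [pos] in HN1; rewrite Rminus_0_r, Rabs_pos_eq in HN1; lra.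
  - apply Rlt_le, HN2; lia.
Qed.

Lemma Rpower_mul_exp_opp_le z s : 0 < z -> 0 < s ->
  Rpower s z * exp (- s) <= exp (z * (ln (2 * z) - 1)) * exp (- s / 2).
Proof.
  intros Hz Hs; unfold Rpower; rewrite <- !exp_plus; apply exp_le.
  assert (Hln : ln (s / (2 * z)) <= s / (2 * z) - 1).
  { pose proof (exp_ineq1_le (ln (s / (2 * z)))) as H.
    rewrite exp_ln in H by (apply Rdiv_lt_0_compat; lra); lra. }
  rewrite ln_div in Hln by lra.
  apply (Rmult_le_compat_l z) in Hln; [|lra].
  replace (z * (s / (2 * z) - 1)) with (s / 2 - z) in Hln by (field; lra).
  replace (- s / 2) with (- s + s / 2) by field; nra.
Qed.

Section GammaIntegral.

Variable z : R.
Hypothesis Hz : -1 < z.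

Let gamma_integrand s := Rpower s z * exp (- s).

Lemma continuous_gamma_integrand s : 0 < s -> continuous gamma_integrand s.
Proof. intros Hs; apply continuous_mult_R; [now apply continuous_Rpower | solve_continuous]. Qed.

Lemma RInt_gamma_integrand_head a : 0 < a <= 1 -> RInt gamma_integrand a 1 <= / (z + 1).
Proof.
  intros Ha; apply Rle_trans with (RInt (fun s => Rpower s z) a 1).
  - apply RInt_le; try apply ex_RInt_pos; try lra; auto using continuous_gamma_integrand, continuous_Rpower.
    intros s Hs; unfold gamma_integrand.
    pose proof (exp_opp_le_1 s); pose proof (exp_pos (z * ln s)); unfold Rpower; nra.
  - rewrite RInt_Rpower, Rpower_1_l by lra.
    pose proof (exp_pos ((z + 1) * ln a)); unfold Rpower, Rdiv.
    assert (0 < / (z + 1)) by (apply Rinv_0_lt_compat; lra). nra.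
Qed.

Lemma RInt_gamma_integrand_tail b : 1 <= b ->
  RInt gamma_integrand 1 b <= 2 * exp ((Rabs z + 1) * (ln (2 * (Rabs z + 1)) - 1)).
Proof.
  intros Hb; set (Z := Rabs z + 1); set (K := exp (Z * (ln (2 * Z) - 1))).
  assert (HZ : 0 < Z) by (unfold Z; pose proof (Rabs_pos z); lra).
  assert (HK : 0 < K) by apply exp_pos.
  apply Rle_trans with (RInt (fun s => K * exp (- s / 2)) 1 b).
  - apply RInt_le; try apply ex_RInt_pos; try lra; auto using continuous_gamma_integrand.
    { intros; solve_continuous. }
    intros s Hs; apply Rle_trans with (Rpower s Z * exp (- s)); [|apply Rpower_mul_exp_opp_le; lra].
    apply Rmult_le_compat_r; [apply Rlt_le, exp_pos|].
    apply Rle_Rpower; [lra|]; unfold Z; pose proof (Rle_abs z); lra.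
  - rewrite (is_RInt_unique (fun s => K * exp (- s / 2)) 1 b (2 * K * (exp (- 1 / 2) - exp (- b / 2)))).
    + pose proof (exp_pos (- b / 2)); pose proof (exp_opp_le_1 (1 / 2)).
      replace (- 1 / 2) with (- (1 / 2)) by field; nra.
    + replace (2 * K * (exp (- 1 / 2) - exp (- b / 2)))
        with (minus (- 2 * K * exp (- b / 2)) (- 2 * K * exp (- 1 / 2)))
        by (unfold minus, plus, opp; simpl; ring).
      apply (@is_RInt_derive R_CompleteNormedModule (fun s => - 2 * K * exp (- s / 2))); intros s _.
      * auto_derive; auto; unfold Rdiv; set (e := exp _); field.
      * solve_continuous.
Qed.

Lemma is_RInt_0_oo_Gamma : is_RInt_0_oo gamma_integrand (Gamma (z + 1)).
Proof.
  set (M := / (z + 1) + 2 * exp ((Rabs z + 1) * (ln (2 * (Rabs z + 1)) - 1))).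
  assert (Hpos : forall s, 0 < s -> 0 <= gamma_integrand s)
    by (intros; apply Rmult_le_pos; apply Rlt_le, exp_pos).
  destruct (is_RInt_0_oo_of_bounded gamma_integrand M continuous_gamma_integrand Hpos) as [L HL].
  - intros a b Hab.
    pose proof (Rmin_l a 1); pose proof (Rmin_r a 1); pose proof (Rmax_l b 1); pose proof (Rmax_r b 1).
    assert (0 < Rmin a 1) by (apply Rmin_glb_lt; lra).
    apply Rle_trans with (RInt gamma_integrand (Rmin a 1) (Rmax b 1));
      [apply RInt_le_superset; auto using continuous_gamma_integrand; lra|].
    rewrite <- (@RInt_Chasles R_CompleteNormedModule _ _ 1) by (apply ex_RInt_pos; auto using continuous_gamma_integrand; lra).
    pose proof (RInt_gamma_integrand_head (Rmin a 1)); pose proof (RInt_gamma_integrand_tail (Rmax b 1)).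
    unfold M; simpl; unfold plus; simpl; lra.
  - replace (Gamma (z + 1)) with L; auto.
    symmetry; unfold Gamma; replace (z + 1 - 1) with z by ring.
    apply (@is_RInt_gen_unique R_CompleteNormedModule);
      [apply Proper_StrongProper, at_right_proper_filter | apply Proper_StrongProper, Rbar_locally_filter |].
    now apply is_RInt_gen_of_is_RInt_0_oo; [exact continuous_gamma_integrand|].
Qed.

End GammaIntegral.

Lemma is_RInt_0_oo_Gamma_sq z : -1 < z ->
  is_RInt_0_oo (fun s => Rpower s z * (2 * (1 - exp (- s)) * exp (- s)))
    ((2 - Rpower 2 (- z)) * Gamma (z + 1)).
Proof.
  intros Hz; set (f := fun s => Rpower s z * exp (- s)).
  pose proof (continuous_gamma_integrand z) as Hf.
  assert (Hf2 : forall s, 0 < s -> continuous (fun s => 2 * f (2 * s)) s).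
  { intros s Hs; apply continuous_mult_R; [apply continuous_const|].
    apply (continuous_comp (fun s => 2 * s) f); [solve_continuous | apply Hf; lra]. }
  pose proof (is_RInt_0_oo_Gamma z Hz) as HG.
  pose proof (is_RInt_0_oo_lin _ _ 2 (- Rpower 2 (- z)) _ _ Hf Hf2 HG
                (is_RInt_0_oo_dilate f 2 _ ltac:(lra) Hf HG)) as Hlin.
  replace ((2 - Rpower 2 (- z)) * Gamma (z + 1))
    with (2 * Gamma (z + 1) + - Rpower 2 (- z) * Gamma (z + 1)) by ring.
  apply (is_RInt_0_oo_ext _ _ _) with (2 := Hlin); intros s Hs; unfold f.
  rewrite <- Rpower_mult_distr, Rpower_Ropp by lra.
  replace (- (2 * s)) with (- s + - s) by ring; rewrite exp_plus.
  field; apply Rgt_not_eq, exp_pos.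
Qed.

(** * Lattice sums against integrals *)

Section LatticeComparison.

Variables (a theta t z J : R) (G g : R -> R).
Hypotheses (Ha : 0 < a < 1) (Htheta : 0 < theta) (Ht : 0 < t).
Hypothesis HG : forall s, 0 < s -> is_derive G s (g s).
Hypothesis Hg : forall s, 0 < s -> continuous g s.
Hypothesis Hcell : forall y s, 0 < y -> a * y < s < y ->
  Rpower y z * g s <= Rpower s z * g s <= Rpower (a * y) z * g s.

Let T j := Rpower (u a theta t j) z * G (u a theta t j).

Lemma RInt_cell_bounds y : 0 < y ->
  Rpower y z * (G y - G (a * y)) <= RInt (fun s => Rpower s z * g s) (a * y) y
  <= Rpower (a * y) z * (G y - G (a * y)).
Proof.
  intros Hy.
  assert (Hay : 0 < a * y) by nra.
  assert (HGint : RInt g (a * y) y = G y - G (a * y)).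
  { apply is_RInt_unique, (@is_RInt_derive R_CompleteNormedModule); intros s Hs;
      [apply HG | apply Hg]; rewrite Rmin_left in Hs; nra. }
  assert (Hex : forall c, ex_RInt (fun s => c * g s) (a * y) y).
  { intros c; apply ex_RInt_pos; auto; intros s Hs.
    apply continuous_mult_R; [apply continuous_const | auto]. }
  rewrite <- !HGint, <- !RInt_scal_R by (apply ex_RInt_pos; auto).
  split; apply RInt_le; auto; try nra;
    try (apply ex_RInt_pos; auto; intros s Hs; apply continuous_mult_R;
         [now apply continuous_Rpower | auto]);
    intros s Hs; apply (Hcell y s Hy Hs).
Qed.

Lemma lattice_sum_integral_bounds :
  zsummable T -> is_RInt_0_oo (fun s => Rpower s z * g s) J ->
  (1 - / Rpower a z) * zsum T <= J <= (Rpower a z - 1) * zsum T.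
Proof.
  intros HT HJ.
  set (q := Rpower a z); assert (Hq : 0 < q) by apply exp_pos.
  assert (Hscale : forall y, 0 < y -> Rpower (a * y) z = q * Rpower y z)
    by (intros y Hy; unfold q; symmetry; apply Rpower_mult_distr; lra).
  set (I j := RInt (fun s => Rpower s z * g s) (u a theta t (j + 1)) (u a theta t j)).
  (* Both bounds are written as [al * T j - be * T (j + 1)] to be telescoped. *)
  assert (HI : forall j, 1 * T j - / q * T (j + 1)%Z <= I j <= q * T j - 1 * T (j + 1)%Z).
  { intros j; unfold I, T; rewrite u_succ by auto.
    pose proof (u_pos a theta Ha Htheta t j Ht) as Hy; set (y := u a theta t j) in *.
    pose proof (RInt_cell_bounds y Hy) as Hc; rewrite Hscale in * by auto.
    replace (1 * (Rpower y z * G y) - / q * (q * Rpower y z * G (a * y)))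
      with (Rpower y z * (G y - G (a * y))) by (field; lra).
    replace (q * (Rpower y z * G y) - 1 * (q * Rpower y z * G (a * y)))
      with (q * Rpower y z * (G y - G (a * y))) by ring.
    exact Hc. }
  pose proof (is_lim_seq_zpartial_RInt_u a theta t _ J Ha Htheta Ht
                (fun s Hs => continuous_mult_R _ _ s (continuous_Rpower z s Hs) (Hg s Hs)) HJ) as HlimI.
  split.
  - exact (is_lim_seq_le _ _ _ _ (fun n => zpartial_le _ _ n (fun j => proj1 (HI j)))
             (is_lim_seq_zpartial_telescope T 1 (/ q) HT) HlimI).
  - exact (is_lim_seq_le _ _ _ _ (fun n => zpartial_le _ _ n (fun j => proj2 (HI j)))
             HlimI (is_lim_seq_zpartial_telescope T q 1 HT)).
Qed.

End LatticeComparison.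

Lemma lattice_sum_bounds_neg a theta t z J (G g : R -> R) :
  0 < a < 1 -> 0 < theta -> 0 < t -> z < 0 ->
  (forall s, 0 < s -> is_derive G s (g s)) -> (forall s, 0 < s -> continuous g s) ->
  (forall s, 0 < s -> 0 <= g s) ->
  zsummable (fun j => Rpower (u a theta t j) z * G (u a theta t j)) ->
  is_RInt_0_oo (fun s => Rpower s z * g s) J ->
  Rpower a (- z) * J / (1 - Rpower a (- z))
  <= zsum (fun j => Rpower (u a theta t j) z * G (u a theta t j))
  <= J / (1 - Rpower a (- z)).
Proof.
  intros Ha Htheta Ht Hz HG Hg Hgpos HT HJ.
  destruct (lattice_sum_integral_bounds a theta t z J G g Ha Htheta Ht HG Hg) as [Hlow Hup]; auto.
  - intros y s Hy Hs; pose proof (Hgpos s ltac:(nra)).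
    split; apply Rmult_le_compat_r, Rle_Rpower_l_nonpos; auto; nra.
  - set (S := zsum _) in *; set (q := Rpower a z) in *.
    assert (Hq : 1 < q) by now apply Rpower_gt_1.
    rewrite Rpower_Ropp; fold q.
    assert (Hinv : 0 < / q < 1) by (split; [apply Rinv_0_lt_compat | rewrite <- Rinv_1; apply Rinv_lt_contravar]; lra).
    split.
    + apply Rle_div_l; [lra|].
      replace (S * (1 - / q)) with (/ q * ((q - 1) * S)) by (field; lra).
      apply Rmult_le_compat_l; lra.
    + apply Rle_div_r; [lra|]; lra.
Qed.

Lemma zsummable_h1 a theta t z : 0 < a < 1 -> 0 < theta -> 0 < t -> 0 < z ->
  zsummable (h1_term a theta z t).
Proof.
  intros Ha Htheta Ht Hz.
  set (K := exp (z * (ln (2 * z) - 1))); assert (HK : 0 < K) by apply exp_pos.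
  assert (Hx : 0 < theta * t) by nra.
  apply (zsummable_geom _ (Rpower (theta * t) z) (Rpower a z) (2 * K * a / (theta * t)) a);
    unfold h1_term.
  - split; [apply Rlt_le, exp_pos | now apply Rpower_lt_1].
  - lra.
  - intros j; apply Rmult_le_pos; apply Rlt_le, exp_pos.
  - intros n; rewrite Rpower_u, <- pow_powerRZ by auto.
    pose proof (exp_opp_le_1 (u a theta t (Z.of_nat n)) (Rlt_le _ _ (u_pos a theta Ha Htheta t _ Ht))).
    pose proof (exp_pos (- u a theta t (Z.of_nat n))).
    assert (0 < Rpower (theta * t) z * Rpower a z ^ n) by (apply Rmult_lt_0_compat; [apply exp_pos | apply pow_lt, exp_pos]).
    nra.
  - intros n; pose proof (u_pos a theta Ha Htheta t (- Z.of_nat n - 1) Ht) as Hy.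
    set (y := u a theta t (- Z.of_nat n - 1)) in *.
    assert (Hexp : exp (- y / 2) <= 2 / y).
    { pose proof (exp_ineq1_le (y / 2)); pose proof (exp_pos (y / 2)).
      replace (- y / 2) with (- (y / 2)) by field; rewrite exp_Ropp.
      replace (2 / y) with (/ (y / 2)) by (field; lra); apply Rinv_le_contravar; lra. }
    apply Rle_trans with (K * exp (- y / 2)); [now apply Rpower_mul_exp_opp_le|].
    replace (2 * K * a / (theta * t) * a ^ n) with (K * (2 / y))
      by (unfold y; rewrite u_neg, pow_inv by auto; field; repeat split; try apply pow_nonzero; lra).
    apply Rmult_le_compat_l; lra.
Qed.

Lemma h1_bounds a theta t z : 0 < a < 1 -> 0 < theta -> 0 < t -> 0 < z ->
  zsummable (h1_term a theta z t) /\
  Gamma (z + 1) / (Rpower a (- z) - 1) <= zsum (h1_term a theta z t)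
  <= Rpower a (- z) * Gamma (z + 1) / (Rpower a (- z) - 1).
Proof.
  intros Ha Htheta Ht Hz.
  pose proof (zsummable_h1 a theta t z Ha Htheta Ht Hz) as HT; split; [exact HT|].
  assert (HJ : is_RInt_0_oo (fun s => Rpower s z * - exp (- s)) (- Gamma (z + 1))).
  { pose proof (continuous_gamma_integrand z) as Hc.
    pose proof (is_RInt_0_oo_Gamma z ltac:(lra)) as HG.
    replace (- Gamma (z + 1)) with (-1 * Gamma (z + 1) + 0 * Gamma (z + 1)) by ring.
    apply (is_RInt_0_oo_ext _ _ _) with (2 := is_RInt_0_oo_lin _ _ (-1) 0 _ _ Hc Hc HG HG).
    intros s _; ring. }
  destruct (lattice_sum_integral_bounds a theta t z (- Gamma (z + 1)) (fun y => exp (- y)) (fun s => - exp (- s))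
              Ha Htheta Ht) as [Hlow Hup]; auto.
  - intros s _; auto_derive; auto; ring.
  - intros s _; solve_continuous.
  - intros y s Hy Hs; pose proof (exp_pos (- s)).
    assert (Rpower (a * y) z <= Rpower s z <= Rpower y z) by (split; apply Rle_Rpower_l; nra).
    split; nra.
  - fold (h1_term a theta z t) in Hlow, Hup; set (S := zsum _) in *.
    set (q := Rpower a z) in *; assert (Hq : 0 < q < 1) by (split; [apply exp_pos | now apply Rpower_lt_1]).
    rewrite Rpower_Ropp; fold q.
    assert (Hinv : 1 < / q) by (rewrite <- Rinv_1; apply Rinv_lt_contravar; lra).
    split.
    + apply Rle_div_l; [lra|].
      replace (S * (/ q - 1)) with (- ((1 - / q) * S)) by ring; lra.
    + apply Rle_div_r; [lra|].
      replace (/ q * Gamma (z + 1)) with (/ q * - - Gamma (z + 1)) by ring.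
      replace (S * (/ q - 1)) with (/ q * ((1 - q) * S)) by (field; lra).
      apply Rmult_le_compat_l; lra.
Qed.

Lemma zsummable_h2 a theta t z : 0 < a < 1 -> 0 < theta -> 0 < t -> -1 < z < 0 ->
  zsummable (h2_term a theta z t).
Proof.
  intros Ha Htheta Ht Hz.
  set (q := Rpower a z); assert (Hq : 1 < q) by (apply Rpower_gt_1; lra).
  assert (Hx : 0 < theta * t) by nra.
  assert (Hterm : forall j, 0 <= 1 - exp (- u a theta t j) <= Rmin 1 (u a theta t j)).
  { intros j; pose proof (u_pos a theta Ha Htheta t j Ht).
    pose proof (exp_opp_le_1 (u a theta t j)); pose proof (exp_ineq1_le (- u a theta t j)).
    pose proof (exp_pos (- u a theta t j)).
    split; [lra | apply Rmin_glb; lra]. }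
  apply (zsummable_geom _ (Rpower (theta * t) z * (theta * t)) (q * a) (Rpower (theta * t) z / q) (/ q));
    unfold h2_term.
  - split; [apply Rmult_le_pos; [apply Rlt_le, exp_pos | lra]|].
    unfold q; rewrite <- (Rpower_1 a) at 2 by lra; rewrite <- Rpower_plus.
    apply Rpower_lt_1; lra.
  - split; [apply Rlt_le, Rinv_0_lt_compat | rewrite <- Rinv_1; apply Rinv_lt_contravar]; lra.
  - intros j; apply Rmult_le_pos; [apply Rlt_le, exp_pos | apply Hterm].
  - intros n; rewrite Rpower_u, <- pow_powerRZ by auto; fold q.
    destruct (Hterm (Z.of_nat n)) as [_ Hle]; pose proof (Rmin_r 1 (u a theta t (Z.of_nat n))).
    rewrite u_of_nat in *; rewrite Rpow_mult_distr.
    assert (0 < Rpower (theta * t) z * q ^ n) by (apply Rmult_lt_0_compat; [apply exp_pos | apply pow_lt; lra]).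
    replace (Rpower (theta * t) z * (theta * t) * (q ^ n * a ^ n))
      with (Rpower (theta * t) z * q ^ n * (theta * t * a ^ n)) by ring.
    apply Rmult_le_compat_l; lra.
  - intros n; rewrite Rpower_u, powerRZ_opp_succ by auto; fold q.
    destruct (Hterm (- Z.of_nat n - 1)%Z) as [_ Hle]; pose proof (Rmin_l 1 (u a theta t (- Z.of_nat n - 1))).
    assert (0 < Rpower (theta * t) z * (/ q * (/ q) ^ n))
      by (apply Rmult_lt_0_compat; [apply exp_pos | apply Rmult_lt_0_compat; [|apply pow_lt]; apply Rinv_0_lt_compat; lra]).
    replace (Rpower (theta * t) z / q * (/ q) ^ n)
      with (Rpower (theta * t) z * (/ q * (/ q) ^ n) * 1) by (unfold Rdiv; ring).
    apply Rmult_le_compat_l; lra.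
Qed.

Lemma h2_bounds a theta t z : 0 < a < 1 -> 0 < theta -> 0 < t -> -1 < z < 0 ->
  zsummable (h2_term a theta z t) /\
  Rpower a (- z) * Gamma (z + 1) / (1 - Rpower a (- z)) <= zsum (h2_term a theta z t)
  <= Gamma (z + 1) / (1 - Rpower a (- z)).
Proof.
  intros Ha Htheta Ht Hz.
  pose proof (zsummable_h2 a theta t z Ha Htheta Ht Hz) as HT; split; [exact HT|].
  apply (lattice_sum_bounds_neg a theta t z _ (fun y => 1 - exp (- y)) (fun s => exp (- s))); auto; try lra.
  - intros s _; auto_derive; auto; ring.
  - intros s _; solve_continuous.
  - intros s _; apply Rlt_le, exp_pos.
  - apply is_RInt_0_oo_Gamma; lra.
Qed.

Lemma h3_bounds a theta t z : 0 < a < 1 -> 0 < theta -> 0 < t -> -1 < z < 0 ->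
  zsummable (h3_term a theta z t) /\
  Rpower a (- z) * (2 - Rpower 2 (- z)) * Gamma (z + 1) / (1 - Rpower a (- z))
  <= zsum (h3_term a theta z t)
  <= (2 - Rpower 2 (- z)) * Gamma (z + 1) / (1 - Rpower a (- z)).
Proof.
  intros Ha Htheta Ht Hz.
  assert (HT : zsummable (h3_term a theta z t)).
  { apply (zsummable_le _ (h2_term a theta z t)); [|now apply zsummable_h2].
    intros j; unfold h3_term, h2_term.
    pose proof (u_pos a theta Ha Htheta t j Ht); assert (0 < Rpower (u a theta t j) z) by apply exp_pos.
    pose proof (exp_opp_le_1 (u a theta t j)); pose proof (exp_pos (- u a theta t j)).
    split; [apply Rmult_le_pos; [lra | apply pow2_ge_0] | apply Rmult_le_compat_l; [lra | simpl; nra]]. }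
  split; [exact HT|].
  rewrite (Rmult_assoc (Rpower a (- z))).
  apply (lattice_sum_bounds_neg a theta t z _ (fun y => (1 - exp (- y)) ^ 2)
           (fun s => 2 * (1 - exp (- s)) * exp (- s))); auto; try lra.
  - intros s _; auto_derive; auto; ring.
  - intros s _; solve_continuous.
  - intros s Hs; pose proof (exp_opp_le_1 s); pose proof (exp_pos (- s)); nra.
  - apply is_RInt_0_oo_Gamma_sq; lra.
Qed.

(** * Averaging over dilations: the tilde sums *)

Lemma le_of_le_add_mul X c P : (forall e, 0 < e < 1 -> X <= c + e * P) -> X <= c.
Proof.
  intros H; apply Rle_plus_epsilon; intros eps Heps.
  pose proof (Rabs_pos P); set (e := Rmin (1 / 2) (eps / (Rabs P + 1))).
  assert (He : 0 < e <= eps / (Rabs P + 1)).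
  { split; [apply Rmin_glb_lt; [lra | apply Rdiv_lt_0_compat; lra] | apply Rmin_r]. }
  assert (He1 : e < 1) by (pose proof (Rmin_l (1 / 2) (eps / (Rabs P + 1))); unfold e in *; lra).
  apply Rle_trans with (c + e * P); [apply H; lra|].
  assert (e * P <= e * Rabs P) by (apply Rmult_le_compat_l; [lra | apply Rle_abs]).
  assert (e * Rabs P <= eps / (Rabs P + 1) * Rabs P) by (apply Rmult_le_compat_r; lra).
  assert (eps / (Rabs P + 1) * Rabs P <= eps).
  { replace (eps / (Rabs P + 1) * Rabs P) with (eps - eps / (Rabs P + 1)) by (field; lra).
    pose proof (Rdiv_lt_0_compat eps (Rabs P + 1) Heps ltac:(lra)); lra. }
  lra.
Qed.

Lemma continuous_zpartial (F : Z -> R -> R) n r :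
  (forall j, continuous (F j) r) -> continuous (fun r => zpartial (fun j => F j r) n) r.
Proof.
  intros HF; induction n; simpl; unfold zpos, zneg;
    repeat apply continuous_plus_R; auto.
Qed.

Lemma RInt_zpartial (F : Z -> R -> R) n a b : (forall j r, continuous (F j) r) ->
  RInt (fun r => zpartial (fun j => F j r) n) a b = zpartial (fun j => RInt (F j) a b) n.
Proof.
  intros HF.
  assert (Hex : forall f : R -> R, (forall r, continuous f r) -> ex_RInt f a b)
    by (intros f Hf; apply (@ex_RInt_continuous R_CompleteNormedModule); auto).
  induction n as [|n IH]; simpl; unfold zpos, zneg.
  - rewrite RInt_plus_R; auto.
  - rewrite <- IH, !RInt_plus_R; try reflexivity; apply Hex; intros r;
      repeat apply continuous_plus_R; auto; now apply continuous_zpartial.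
Qed.

Lemma Rpower_le_self e p : 0 < e <= 1 -> 1 <= p -> Rpower e p <= e.
Proof.
  intros He Hp; unfold Rpower; rewrite <- (exp_ln e) at 2 by lra; apply exp_le.
  assert (ln e <= 0) by (rewrite <- ln_1; apply ln_le; lra). nra.
Qed.

Section DilationAverage.

Variables (a theta z t Blow Bup : R) (G : R -> R).
Hypotheses (Ha : 0 < a < 1) (Htheta : 0 < theta) (Hz : z < 0) (Ht : 0 < t).
Hypothesis HGc : forall s, continuous G s.
Hypothesis HGmono : forall x y, 0 <= x <= y -> G x <= G y.
Hypothesis HGpos : forall x, 0 <= x -> 0 <= G x.

Let T t' j := Rpower (u a theta t' j) z * G (u a theta t' j).

Hypothesis HT : forall t', 0 < t' -> zsummable (T t') /\ Blow <= zsum (T t') <= Bup.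

Let term j r := Rpower (u a theta t j) z * G (r * u a theta t j).
Let avg j := RInt (term j) 0 1.
Let F n r := zpartial (fun j => term j r) n.
Let tail n := zsum (T t) - zpartial (T t) n.

Lemma continuous_term j r : continuous (term j) r.
Proof.
  apply continuous_mult_R; [apply continuous_const|].
  apply (continuous_comp (fun r => r * u a theta t j) G); [solve_continuous | apply HGc].
Qed.

Lemma T_ge0 t' j : 0 < t' -> 0 <= T t' j.
Proof.
  intros Ht'; apply Rmult_le_pos; [apply Rlt_le, exp_pos | apply HGpos, Rlt_le, u_pos; auto].
Qed.

Lemma term_bounds j r : 0 <= r <= 1 -> 0 <= term j r <= T t j.
Proof.
  intros Hr; pose proof (u_pos a theta Ha Htheta t j Ht).
  assert (0 < Rpower (u a theta t j) z) by apply exp_pos.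
  split; [apply Rmult_le_pos; [lra | apply HGpos; nra] | apply Rmult_le_compat_l; [lra | apply HGmono; nra]].
Qed.

Lemma zsummable_avg : zsummable avg.
Proof.
  apply (zsummable_le _ (T t)); [|apply HT; auto].
  intros j; unfold avg; split.
  - apply RInt_ge_0; [lra | apply (@ex_RInt_continuous R_CompleteNormedModule); intros; apply continuous_term |].
    intros r Hr; apply term_bounds; lra.
  - replace (T t j) with (RInt (fun _ => T t j) 0 1) by now rewrite RInt_const_R, Rminus_0_r, Rmult_1_l.
    apply RInt_le; [lra | apply (@ex_RInt_continuous R_CompleteNormedModule); intros; apply continuous_term
                   | apply ex_RInt_const |].
    intros r Hr; apply term_bounds; lra.
Qed.

Lemma RInt_F n : RInt (F n) 0 1 = zpartial avg n.
Proof. apply RInt_zpartial, continuous_term. Qed.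

Lemma F_dilate n r : 0 < r -> F n r = Rpower r (- z) * zpartial (T (r * t)) n.
Proof.
  intros Hr; rewrite <- zpartial_scal.
  apply zpartial_ext; intros j; unfold term, T.
  rewrite u_dilate, <- Rpower_mult_distr by (auto using u_pos).
  rewrite Rpower_Ropp; field; apply Rgt_not_eq, exp_pos.
Qed.

Lemma F_bounds n r : 0 <= r <= 1 -> 0 <= F n r <= zpartial (T t) n.
Proof.
  intros Hr; split; [apply zpartial_ge0 | apply zpartial_le]; intros j; apply term_bounds; auto.
Qed.

Lemma F_le n r : 0 < r -> F n r <= Rpower r (- z) * Bup.
Proof.
  intros Hr; rewrite F_dilate by auto.
  apply Rmult_le_compat_l; [apply Rlt_le, exp_pos|].
  destruct (HT (r * t)) as [HTs [_ Hup]]; [nra|].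
  apply Rle_trans with (zsum (T (r * t))); auto.
  apply zpartial_le_zsum; auto; intros j; apply T_ge0; nra.
Qed.

Lemma F_ge n r : 0 < r <= 1 -> Rpower r (- z) * Blow - tail n <= F n r.
Proof.
  intros Hr; rewrite F_dilate by lra.
  destruct (HT (r * t)) as [HTr [Hlow _]]; [nra|]; destruct (HT t Ht) as [HTt _].
  set (D j := Rpower r z * T t j + -1 * T (r * t) j).
  assert (HD : forall j, 0 <= D j).
  { intros j; unfold D, T; rewrite u_dilate, <- Rpower_mult_distr by (auto using u_pos; lra).
    pose proof (u_pos a theta Ha Htheta t j Ht).
    assert (G (r * u a theta t j) <= G (u a theta t j)) by (apply HGmono; nra).
    assert (0 < Rpower r z * Rpower (u a theta t j) z) by (apply Rmult_lt_0_compat; apply exp_pos).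
    nra. }
  pose proof (zpartial_le_zsum D n HD (zsummable_lin _ _ _ _ HTt HTr)) as Htail.
  unfold D in Htail; rewrite zpartial_lin, zsum_lin in Htail by auto.
  assert (Hrz : Rpower r (- z) * Rpower r z = 1) by (rewrite Rpower_Ropp; apply Rinv_l, Rgt_not_eq, exp_pos).
  assert (Hp : 0 < Rpower r (- z)) by apply exp_pos.
  apply Rle_trans with (Rpower r (- z) * (zsum (T (r * t)) - Rpower r z * tail n)).
  - replace (Rpower r (- z) * (zsum (T (r * t)) - Rpower r z * tail n))
      with (Rpower r (- z) * zsum (T (r * t)) - tail n)
      by (rewrite Rmult_minus_distr_l, <- Rmult_assoc, Hrz; ring).
    apply Rplus_le_compat_r, Rmult_le_compat_l; lra.
  - apply Rmult_le_compat_l; unfold tail; lra.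
Qed.

Lemma is_lim_seq_tail : is_lim_seq tail 0.
Proof.
  replace 0 with (zsum (T t) - zsum (T t)) by ring.
  apply is_lim_seq_minus'; [apply is_lim_seq_const | apply is_lim_seq_zpartial, HT; auto].
Qed.

Lemma RInt_Rpower_opp e : 0 < e <= 1 ->
  RInt (fun r => Rpower r (- z)) e 1 = (1 - Rpower e (1 - z)) / (1 - z).
Proof.
  intros He; rewrite RInt_Rpower, Rpower_1_l by lra.
  now replace (- z + 1) with (1 - z) by ring.
Qed.

Lemma ex_RInt_F n b c : ex_RInt (F n) b c.
Proof.
  apply (@ex_RInt_continuous R_CompleteNormedModule); intros r _.
  apply continuous_zpartial; intros j; apply continuous_term.
Qed.

(* [Rpower 0 _] is the junk value 1, so bounds through [Rpower r (- z)] are only used on [e, 1]. *)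
Lemma split_RInt_F n e : RInt (F n) 0 1 = RInt (F n) 0 e + RInt (F n) e 1.
Proof. symmetry; apply (@RInt_Chasles R_CompleteNormedModule); apply ex_RInt_F. Qed.

Lemma zpartial_avg_le n : zpartial avg n <= Bup / (1 - z).
Proof.
  destruct (HT t Ht) as [HTt [_ Hup]].
  assert (HBup : 0 <= Bup).
  { pose proof (zpartial_le_zsum (T t) 0 (fun j => T_ge0 t j Ht) HTt).
    pose proof (zpartial_ge0 (T t) 0 (fun j => T_ge0 t j Ht)); lra. }
  apply (le_of_le_add_mul _ _ (zpartial (T t) n)); intros e He.
  rewrite <- RInt_F, (split_RInt_F n e).
  assert (Hhead : RInt (F n) 0 e <= RInt (fun _ => zpartial (T t) n) 0 e).
  { apply RInt_le; [lra | apply ex_RInt_F | apply ex_RInt_const |].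
    intros r Hr; apply F_bounds; lra. }
  assert (Hbody : RInt (F n) e 1 <= RInt (fun r => Bup * Rpower r (- z)) e 1).
  { apply RInt_le; [lra | apply ex_RInt_F | |].
    - apply ex_RInt_pos; try lra; intros r Hr.
      apply continuous_mult_R; [apply continuous_const | now apply continuous_Rpower].
    - intros r Hr; rewrite Rmult_comm; apply F_le; lra. }
  rewrite RInt_const_R in Hhead.
  rewrite RInt_scal_R, RInt_Rpower_opp in Hbody by
    (try apply ex_RInt_pos; try lra; intros; now apply continuous_Rpower).
  assert (Bup * ((1 - Rpower e (1 - z)) / (1 - z)) <= Bup / (1 - z)).
  { unfold Rdiv; rewrite <- Rmult_assoc, Rmult_comm.
    assert (0 < Rpower e (1 - z)) by apply exp_pos.
    assert (0 <= Bup * / (1 - z)) by (apply Rmult_le_pos; [lra | apply Rlt_le, Rinv_0_lt_compat; lra]).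
    nra. }
  lra.
Qed.

Lemma zpartial_avg_ge n e : 0 < e < 1 ->
  Blow / (1 - z) * (1 - Rpower e (1 - z)) - tail n <= zpartial avg n.
Proof.
  intros He; destruct (HT t Ht) as [HTt _].
  rewrite <- RInt_F, (split_RInt_F n e).
  assert (Htail : 0 <= tail n)
    by (pose proof (zpartial_le_zsum (T t) n (fun j => T_ge0 t j Ht) HTt); unfold tail; lra).
  assert (Hhead : 0 <= RInt (F n) 0 e).
  { apply RInt_ge_0; [lra | apply ex_RInt_F |].
    intros r Hr; apply F_bounds; lra. }
  assert (Hbody : RInt (fun r => Blow * Rpower r (- z) + -1 * tail n) e 1 <= RInt (F n) e 1).
  { apply RInt_le; [lra | | apply ex_RInt_F |].
    - apply ex_RInt_pos; try lra; intros r Hr; apply continuous_plus_R;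
        [apply continuous_mult_R; [apply continuous_const | now apply continuous_Rpower] | apply continuous_const].
    - intros r Hr; pose proof (F_ge n r ltac:(lra)); lra. }
  rewrite RInt_plus_R, RInt_scal_R, RInt_scal_R, RInt_Rpower_opp, RInt_const_R in Hbody
    by (try apply ex_RInt_const; try apply ex_RInt_pos; try lra; intros; try apply continuous_mult_R;
        try apply continuous_const; now apply continuous_Rpower).
  assert (Blow / (1 - z) * (1 - Rpower e (1 - z)) = Blow * ((1 - Rpower e (1 - z)) / (1 - z))) by (field; lra).
  nra.
Qed.

Lemma avg_bounds : zsummable avg /\ Blow / (1 - z) <= zsum avg <= Bup / (1 - z).
Proof.
  pose proof (is_lim_seq_zpartial avg zsummable_avg) as Hlim.
  split; [exact zsummable_avg | split].
  - set (c := Blow / (1 - z)).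
    enough (- zsum avg <= - c) by lra.
    apply (le_of_le_add_mul _ _ (Rabs c)); intros e He.
    assert (Hlow : c * (1 - Rpower e (1 - z)) - 0 <= zsum avg).
    { refine (is_lim_seq_le (fun n => c * (1 - Rpower e (1 - z)) - tail n) (zpartial avg)
                (c * (1 - Rpower e (1 - z)) - 0) (zsum avg) _ _ Hlim).
      - intros n; now apply zpartial_avg_ge.
      - apply is_lim_seq_minus'; [apply is_lim_seq_const | exact is_lim_seq_tail]. }
    assert (c * Rpower e (1 - z) <= e * Rabs c).
    { pose proof (Rpower_le_self e (1 - z) ltac:(lra) ltac:(lra)).
      apply Rle_trans with (Rabs c * Rpower e (1 - z));
        [apply Rmult_le_compat_r; [apply Rlt_le, exp_pos | apply Rle_abs]|].
      rewrite Rmult_comm; apply Rmult_le_compat_r; [apply Rabs_pos | lra]. }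
    lra.
  - exact (is_lim_seq_le (zpartial avg) (fun _ => Bup / (1 - z)) (zsum avg) (Bup / (1 - z))
             zpartial_avg_le Hlim (is_lim_seq_const _)).
Qed.

End DilationAverage.

Lemma Rpower_pred y z : 0 < y -> Rpower y (z - 1) = Rpower y z / y.
Proof. intros Hy; unfold Rminus, Rdiv; rewrite Rpower_plus, Rpower_Ropp, Rpower_1 by auto; reflexivity. Qed.

Lemma RInt_dilation_h2 y z : 0 < y ->
  RInt (fun r => Rpower y z * (1 - exp (- (r * y)))) 0 1
  = Rpower y (z - 1) * (exp (- y) - 1 + y).
Proof.
  intros Hy; rewrite RInt_scal_R by (apply (@ex_RInt_continuous R_CompleteNormedModule); intros; solve_continuous).
  rewrite (is_RInt_unique _ 0 1 (minus (1 + exp (- (1 * y)) / y) (0 + exp (- (0 * y)) / y))).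
  - unfold minus, plus, opp; simpl; rewrite Rpower_pred, Rmult_1_l, Rmult_0_l, Ropp_0, exp_0 by auto.
    field; lra.
  - apply (@is_RInt_derive R_CompleteNormedModule (fun r => r + exp (- (r * y)) / y)); intros r _.
    + auto_derive; auto; field; lra.
    + solve_continuous.
Qed.

Lemma RInt_dilation_h3 y z : 0 < y ->
  RInt (fun r => Rpower y z * (1 - exp (- (r * y))) ^ 2) 0 1
  = Rpower y (z - 1) * (2 * exp (- y) - / 2 * exp (- (2 * y)) + y - 3 / 2).
Proof.
  intros Hy; rewrite RInt_scal_R by (apply (@ex_RInt_continuous R_CompleteNormedModule); intros; solve_continuous).
  set (P r := r + 2 * exp (- (r * y)) / y - exp (- (r * y)) ^ 2 / (2 * y)).
  rewrite (is_RInt_unique _ 0 1 (minus (P 1) (P 0))).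
  - unfold minus, plus, opp, P; simpl; rewrite Rpower_pred, Rmult_1_l, Rmult_0_l, Ropp_0, exp_0 by auto.
    replace (- (2 * y)) with (- y + - y) by ring; rewrite exp_plus; field; lra.
  - apply (@is_RInt_derive R_CompleteNormedModule P); intros r _; unfold P.
    + auto_derive; auto; field; lra.
    + solve_continuous.
Qed.

Lemma h2t_bounds a theta t z : 0 < a < 1 -> 0 < theta -> 0 < t -> -1 < z < 0 ->
  zsummable (h2t_term a theta z t) /\
  Rpower a (- z) * Gamma (z + 1) / ((1 - Rpower a (- z)) * (1 - z)) <= zsum (h2t_term a theta z t)
  <= Gamma (z + 1) / ((1 - Rpower a (- z)) * (1 - z)).
Proof.
  intros Ha Htheta Ht Hz.
  assert (Havg : forall j, RInt (fun r => Rpower (u a theta t j) z * (1 - exp (- (r * u a theta t j)))) 0 1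
                           = h2t_term a theta z t j)
    by (intros j; apply RInt_dilation_h2, u_pos; auto).
  destruct (avg_bounds a theta z t (Rpower a (- z) * Gamma (z + 1) / (1 - Rpower a (- z)))
              (Gamma (z + 1) / (1 - Rpower a (- z))) (fun y => 1 - exp (- y)) Ha Htheta ltac:(lra) Ht)
    as [Hs Hb].
  - intros s; solve_continuous.
  - intros x y Hxy; pose proof (exp_le (- y) (- x) ltac:(lra)); lra.
  - intros x Hx; pose proof (exp_opp_le_1 x Hx); lra.
  - intros t' Ht'; now apply h2_bounds.
  - rewrite (zsum_ext _ _ Havg) in Hb; split; [exact (zsummable_ext _ _ Havg Hs)|].
    unfold Rdiv in *; rewrite Rinv_mult, <- !Rmult_assoc; exact Hb.
Qed.

Lemma h3t_bounds a theta t z : 0 < a < 1 -> 0 < theta -> 0 < t -> -1 < z < 0 ->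
  zsummable (h3t_term a theta z t) /\
  Rpower a (- z) * (2 - Rpower 2 (- z)) * Gamma (z + 1) / ((1 - Rpower a (- z)) * (1 - z))
  <= zsum (h3t_term a theta z t)
  <= (2 - Rpower 2 (- z)) * Gamma (z + 1) / ((1 - Rpower a (- z)) * (1 - z)).
Proof.
  intros Ha Htheta Ht Hz.
  assert (Havg : forall j, RInt (fun r => Rpower (u a theta t j) z * (1 - exp (- (r * u a theta t j))) ^ 2) 0 1
                           = h3t_term a theta z t j)
    by (intros j; apply RInt_dilation_h3, u_pos; auto).
  destruct (avg_bounds a theta z t (Rpower a (- z) * (2 - Rpower 2 (- z)) * Gamma (z + 1) / (1 - Rpower a (- z)))
              ((2 - Rpower 2 (- z)) * Gamma (z + 1) / (1 - Rpower a (- z))) (fun y => (1 - exp (- y)) ^ 2)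
              Ha Htheta ltac:(lra) Ht) as [Hs Hb].
  - intros s; solve_continuous.
  - intros x y Hxy; pose proof (exp_le (- y) (- x) ltac:(lra)).
    pose proof (exp_opp_le_1 x (proj1 Hxy)); pose proof (exp_pos (- y)); simpl; nra.
  - intros x Hx; pose proof (exp_opp_le_1 x Hx); simpl; nra.
  - intros t' Ht'; now apply h3_bounds.
  - rewrite (zsum_ext _ _ Havg) in Hb; split; [exact (zsummable_ext _ _ Havg Hs)|].
    unfold Rdiv in *; rewrite Rinv_mult, <- !Rmult_assoc; exact Hb.
Qed.

Lemma a_par_theta_par_pos (N : nat) (c sigma : R) :
  (2 <= N)%nat -> 0 < c < INR N -> 0 < sigma ->
  0 < a_par N c < 1 /\ 0 < theta_par N c sigma.
Proof.
  intros HN Hc Hsigma.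
  assert (HN2 : 2 <= INR N) by (replace 2 with (INR 2) by (simpl; ring); now apply le_INR).
  unfold a_par, theta_par; split; [split|].
  - apply Rdiv_lt_0_compat; lra.
  - apply Rlt_div_l; lra.
  - apply Rdiv_lt_0_compat; [|lra]; apply Rmult_lt_0_compat; auto.
    enough (1 < INR N ^ 2 / c) by lra.
    apply Rlt_div_r; nra.
Qed.

Theorem proposition3p1p1 (N : nat) (c sigma : R)
  (HN : (2 <= N)%nat) (Hc0 : 0 < c) (HcN : c < INR N) (Hsigma : 0 < sigma) :
  let a := a_par N c in
  let theta := theta_par N c sigma in
  forall (zeta t : R), 0 < t ->
  let G := Gamma (zeta + 1) in
  (0 < zeta ->
     zsummable (h1_term a theta zeta t) /\
     G / (Rpower a (- zeta) - 1) <= zsum (h1_term a theta zeta t) <=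
       Rpower a (- zeta) * G / (Rpower a (- zeta) - 1)) /\
  (-1 < zeta < 0 ->
     (zsummable (h2_term a theta zeta t) /\
      Rpower a (- zeta) * G / (1 - Rpower a (- zeta)) <= zsum (h2_term a theta zeta t) <=
        G / (1 - Rpower a (- zeta))) /\
     (zsummable (h3_term a theta zeta t) /\
      Rpower a (- zeta) * (2 - Rpower 2 (- zeta)) * G / (1 - Rpower a (- zeta))
        <= zsum (h3_term a theta zeta t) <=
        (2 - Rpower 2 (- zeta)) * G / (1 - Rpower a (- zeta))) /\
     (zsummable (h2t_term a theta zeta t) /\
      Rpower a (- zeta) * G / ((1 - Rpower a (- zeta)) * (1 - zeta))
        <= zsum (h2t_term a theta zeta t) <=
        G / ((1 - Rpower a (- zeta)) * (1 - zeta))) /\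
     (zsummable (h3t_term a theta zeta t) /\
      Rpower a (- zeta) * (2 - Rpower 2 (- zeta)) * G / ((1 - Rpower a (- zeta)) * (1 - zeta))
        <= zsum (h3t_term a theta zeta t) <=
        (2 - Rpower 2 (- zeta)) * G / ((1 - Rpower a (- zeta)) * (1 - zeta)))).
Proof.
  intros a theta zeta t Ht G.
  destruct (a_par_theta_par_pos N c sigma HN (conj Hc0 HcN) Hsigma) as [Ha Htheta].
  split.
  - intros Hz; now apply h1_bounds.
  - intros Hz; split; [|split; [|split]];
      [apply h2_bounds | apply h3_bounds | apply h2t_bounds | apply h3t_bounds]; auto.
Qed.
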